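(* Consider the multi-product personalized pricing model described in the context, fix a vector $f\in\mathbb{R}^n$ with all components positive, and suppose that Assumptions A0 and A1 hold. Let $q_{\min}:=\min_{i\in N,j\in M}\bar p_{ij}/f_i$ and $q_{\max}:=\max_{i\in N,j\in M}\bar p_{ij}/f_i$. Then $$\bar{\mathcal{R}}\le \beta\,\mathcal{R}^f,\qquad \beta:=1+\ln(q_{\max}/q_{\min}).$$ Moreover, the bound is tight: for every $\rho>1$ there is an instance satisfying the hypotheses with $q_{\max}/q_{\min}=\rho$ and $\bar{\mathcal{R}}=(1+\ln\rho)\,\mathcal{R}^f$.
   Context: A firm sells products $N=\{1,\dots,n\}$ to customer types $M=\{1,\dots,m\}$. For each $i\in N$, $j\in M$, $d_{ij}:\mathbb{R}^n_{\ge 0}\to\mathbb{R}_{\ge 0}$ is the (non-negative) demand for product $i$ by type $j$ at price vector $p=(p_1,\dots,p_n)$. The profit from type $j$ is $R_j(p)=\sum_{i\in N}p_i d_{ij}(p)$ and $\mathcal{R}^*_j:=\max_{p\ge 0}R_j(p)$. Type weights $\theta_j>0$ satisfy $\sum_j\theta_j=1$. The optimal personalized profit is $\bar{\mathcal{R}}:=\sum_{j\in M}\theta_j\mathcal{R}^*_j$; the aggregate profit is $R(p):=\sum_{j}\theta_jR_j(p)$. For a positive vector $f$, $\mathcal{R}^f:=\max_{q>0}R(qf)$ (optimal profit when pricing along $f$). Assumption A0: for each $j\in M$, $R_j$ attains its maximum over $p\ge0$ at a price vector $\bar p^j=(\bar p_{1j},\dots,\bar p_{nj})$ with all components positive and finite;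 such maximizers are fixed. Define $\delta_{ij}(q):=1$ if $q\le \bar p_{ij}/f_i$ and $\delta_{ij}(q):=0$ otherwise, and for $q\ge0$ $$G(q):=\sum_{j\in M}\theta_j\sum_{i\in N}f_i d_{ij}(\bar p^j)\delta_{ij}(q),\qquad H(q):=\sum_{j\in M}\theta_j\sum_{i\in N}f_i d_{ij}(qf).$$ Assumption A1: $G(q)\le H(q)$ for all $q\ge 0$. (For the tightness claim, the paper's extremal instance has a single product, $f=e$, and a continuum of customer types with willingness to pay in $[1,\rho]$; the model is understood to allow such a continuum of types with sums over types replaced by integrals.) *)

From HB Require Import structures.
From mathcomp Require Import all_boot all_order all_algebra.
From mathcomp Require Import all_classical all_reals all_analysis.
Set Implicit Arguments. Unset Strict Implicit. Unset Printing Implicit Defensive.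
Import Order.TTheory GRing.Theory Num.Theory.
Import numFieldNormedType.Exports.
Local Open Scope classical_set_scope.
Local Open Scope ring_scope.

Section Common.
Variable R : realType.

Definition profit (n : nat) (dj : 'I_n -> ('I_n -> R) -> R) (p : 'I_n -> R) : R :=
  \sum_(i < n) p i * dj i p.

Definition scalev (n : nat) (q : R) (f : 'I_n -> R) : 'I_n -> R := fun i => q * f i.

Definition nonneg_vec (n : nat) (p : 'I_n -> R) : Prop := forall i, 0 <= p i.
Definition pos_vec (n : nat) (p : 'I_n -> R) : Prop := forall i, 0 < p i.

Definition ratio_set (J : Type) (n : nat) (pbar : J -> 'I_n -> R) (f : 'I_n -> R) : set R :=
  [set pbar j i / f i | j in [set: J] & i in [set: 'I_n]].
Definition qmin (J : Type) (n : nat) (pbar : J -> 'I_n -> R) (f : 'I_n -> R) : R :=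
  inf (ratio_set pbar f).
Definition qmax (J : Type) (n : nat) (pbar : J -> 'I_n -> R) (f : 'I_n -> R) : R :=
  sup (ratio_set pbar f).

Definition delta (x : R) (q : R) : R := if q <= x then 1 else 0.

Variables (n m : nat).
Implicit Types (theta : 'I_m -> R) (d : 'I_n -> 'I_m -> ('I_n -> R) -> R)
  (pbar : 'I_m -> 'I_n -> R) (f p : 'I_n -> R).

(* \bar R = sum_j theta_j R_j(pbar^j) = sum_j theta_j R^*_j  (by A0) *)
Definition Rbar_fin theta d pbar : R :=
  \sum_(j < m) theta j * profit (fun i => d i j) (pbar j).

Definition Ragg_fin theta d p : R :=
  \sum_(j < m) theta j * profit (fun i => d i j) p.

Definition Rf_fin theta d f : R :=
  sup [set Ragg_fin theta d (scalev q f) | q in [set q : R | 0 < q]].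

Definition G_fin theta d pbar f (q : R) : R :=
  \sum_(j < m) theta j * \sum_(i < n) f i * d i j (pbar j) * delta (pbar j i / f i) q.

Definition H_fin theta d f (q : R) : R :=
  \sum_(j < m) theta j * \sum_(i < n) f i * d i j (scalev q f).

Definition A0_fin d pbar : Prop :=
  forall j, pos_vec (pbar j) /\
    forall p, nonneg_vec p -> profit (fun i => d i j) p <= profit (fun i => d i j) (pbar j).

Definition A1_fin theta d pbar f : Prop :=
  forall q : R, 0 <= q -> G_fin theta d pbar f q <= H_fin theta d f q.

End Common.

Section Continuum.
Variable R : realType.
Variable n : nat.
Implicit Types (theta : probability R R) (d : 'I_n -> R -> ('I_n -> R) -> R)
  (pbar : R -> 'I_n -> R) (f p : 'I_n -> R).

Definition Rbar_c theta d pbar : R :=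
  fine (\int[theta]_t (profit (fun i => d i t) (pbar t))%:E).

Definition Ragg_c theta d p : R :=
  fine (\int[theta]_t (profit (fun i => d i t) p)%:E).

Definition Rf_c theta d f : R :=
  sup [set Ragg_c theta d (scalev q f) | q in [set q : R | 0 < q]].

Definition G_integrand d pbar f (q : R) (t : R) : R :=
  \sum_(i < n) f i * d i t (pbar t) * delta (pbar t i / f i) q.
Definition H_integrand d f (q : R) (t : R) : R :=
  \sum_(i < n) f i * d i t (scalev q f).

Definition G_c theta d pbar f (q : R) : R :=
  fine (\int[theta]_t (G_integrand d pbar f q t)%:E).
Definition H_c theta d f (q : R) : R :=
  fine (\int[theta]_t (H_integrand d f q t)%:E).

Definition continuum_instance theta d pbar f : Prop :=
  pos_vec f /\
  (forall i t p, 0 <= d i t p) /\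
  (forall t, pos_vec (pbar t) /\
         forall p, nonneg_vec p ->
           profit (fun i => d i t) p <= profit (fun i => d i t) (pbar t)) /\
  theta.-integrable setT (fun t => (profit (fun i => d i t) (pbar t))%:E) /\
      (forall q : R, 0 < q ->
         theta.-integrable setT (fun t => (profit (fun i => d i t) (scalev q f))%:E)) /\
      (forall q : R, 0 <= q ->
         theta.-integrable setT (fun t => (G_integrand d pbar f q t)%:E) /\
         theta.-integrable setT (fun t => (H_integrand d f q t)%:E)) /\
  has_ubound [set Ragg_c theta d (scalev q f) | q in [set q : R | 0 < q]] /\
  (forall q : R, 0 <= q -> G_c theta d pbar f q <= H_c theta d f q).

End Continuum.

From HB Require Import structures.
From mathcomp Require Import all_boot all_order all_algebra.
From mathcomp Require Import all_classical all_reals all_analysis.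
From mathcomp Require Import ring lra.
From mathcomp Require Import measurable_realfun.
Import Order.TTheory GRing.Theory Num.Theory.
Import numFieldNormedType.Exports.
Set Implicit Arguments. Unset Strict Implicit. Unset Printing Implicit Defensive.
Local Open Scope classical_set_scope.
Local Open Scope ring_scope.

(* Write w_k := theta_j f_i d_ij(pbar^j) and r_k := pbar_ij / f_i for k = (j, i).  Then
   Rbar = sum_k w_k r_k and G(q) is the mass sum_(r_l >= q) w_l of the ratios above q.
   Since q H(q) = R(qf) <= R^f, Assumption A1 gives r_k G(r_k) <= R^f for every k.
   Peeling the ratios off from the largest one, the layer between two consecutive ratios
   r' < r contributes at most R^f (1 - r'/r) <= R^f ln(r/r'), and the last layer at most
   R^f; the logarithms telescope to ln(qmax/qmin).
   For tightness take one product and types t uniform on [0, 1] valuing it at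
   min(rho, 1/t): then Rbar = 1 + ln rho, while q P(value >= q) <= 1 with equality at q = 1. *)

Lemma big_setD1_cond (V : nmodType) (K : finType) (A : {set K}) (P : pred K)
    (F : K -> V) k0 :
  k0 \in A -> P k0 -> \sum_(k in A | P k) F k = F k0 + \sum_(k in A :\ k0 | P k) F k.
Proof.
move=> k0A Pk0; rewrite (bigD1 k0) /=; last by rewrite k0A Pk0.
congr (_ + _); apply: eq_bigl => k; rewrite in_setD1.
by case: (k == k0); rewrite /= ?andbF ?andbT.
Qed.

Section SupInf.
Variable R : realType.

Lemma sup_max (E : set R) x : E x -> ubound E x -> sup E = x.
Proof.
move=> Ex ubx; apply/eqP; rewrite eq_le ge_sup //=; last by exists x.
exact: (ub_le_sup (ex_intro _ x ubx)).
Qed.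

Lemma inf_min (E : set R) x : E x -> lbound E x -> inf E = x.
Proof.
move=> Ex lbx; apply/eqP; rewrite eq_le lb_le_inf ?andbT //; last by exists x.
exact: (ge_inf (ex_intro _ x lbx)).
Qed.

Lemma inf_range_fin (K : finType) (r : K -> R) (k0 : K) :
  exists2 kmin, inf (range r) = r kmin & forall k, r kmin <= r k.
Proof.
case: (@arg_minP _ _ K k0 predT r isT) => kmin _ kmin_min.
exists kmin => [|k]; last exact: kmin_min.
by apply: inf_min; [exists kmin | move=> _ [k _ <-]; exact: kmin_min].
Qed.

Lemma sup_range_fin (K : finType) (r : K -> R) (k0 : K) :
  exists2 kmax, sup (range r) = r kmax & forall k, r k <= r kmax.
Proof.
case: (@arg_maxP _ _ K k0 predT r isT) => kmax _ kmax_max.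
exists kmax => [|k]; last exact: kmax_max.
by apply: sup_max; [exists kmax | move=> _ [k _ <-]; exact: kmax_max].
Qed.

End SupInf.

Section LayerCake.
Variable R : realType.
Implicit Types (a x r C T M : R).

Lemma one_sub_inv_le_ln x : 0 < x -> 1 - x^-1 <= ln x.
Proof.
move=> x0; have : -1 < x^-1 - 1 by rewrite -invr_gt0 in x0; lra.
move/le_ln1Dx; rewrite addrCA subrr addr0 lnV ?posrE //; lra.
Qed.

Lemma top_layer_le_ln r T M C : 0 < r -> r <= M -> 0 <= C -> M * T <= C ->
  T * (M - r) <= C * ln (M / r).
Proof.
move=> r_gt0 rM C_ge0 MTC; have M_gt0 : 0 < M by apply: lt_le_trans rM.
have -> : T * (M - r) = M * T * (1 - (M / r)^-1).
  by rewrite invf_div; field; rewrite gt_eqF.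
have ln_ge : 1 - (M / r)^-1 <= ln (M / r) by apply/one_sub_inv_le_ln/divr_gt0.
apply: le_trans (ler_wpM2l C_ge0 ln_ge); apply: ler_wpM2r => //.
by rewrite invf_div subr_ge0 ler_pdivrMr // mul1r.
Qed.

(* [T] is the mass of the layers above [M] that have already been peeled off. *)
Lemma weighted_sum_le_ln_from (K : finType) (w r : K -> R) (A : {set K}) a C T M :
  0 < a -> a <= M -> 0 <= T -> M * T <= C ->
  {in A, forall k, 0 <= w k /\ a <= r k <= M} ->
  {in A, forall k, r k * (T + \sum_(l in A | r k <= r l) w l) <= C} ->
  T * M + \sum_(k in A) w k * r k <= C * (1 + ln (M / a)).
Proof.
have [N] := ubnP #|A|; elim: N A T M => // N IH A T M /ltnSE cardA.
move=> a_gt0 aM T_ge0 MTC wrA massC.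
have M_gt0 : 0 < M by apply: lt_le_trans aM.
have C_ge0 : 0 <= C by apply: le_trans MTC; rewrite mulr_ge0 // ltW.
have ln_ge0 : 0 <= ln (M / a) by rewrite ln_ge0 // ler_pdivlMr // mul1r.
have [-> | [k1 k1A]] := set_0Vmem A.
  rewrite big_set0 addr0; nra.
have [k0 k0A r_le_r0] : exists2 k0, k0 \in A & {in A, forall k, r k <= r k0}.
  by case: (arg_maxP r k1A) => k0; exists k0.
set r0 := r k0; set A' := A :\ k0.
have [w0_ge0 /andP [a_le_r0 r0_le_M]] := wrA k0 k0A.
have A'_sub k : k \in A' -> k \in A by rewrite in_setD1 => /andP [].
have r0_gt0 : 0 < r0 by apply: lt_le_trans a_le_r0.
have cardA' : (#|A'| < N)%N.
  by apply: leq_trans cardA; rewrite /A' (cardsD1 k0 A) k0A.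
have IHA' : (T + w k0) * r0 + \sum_(k in A') w k * r k <= C * (1 + ln (r0 / a)).
  apply: IH => //; first exact: addr_ge0.
  - have := massC k0 k0A; rewrite (big_setD1_cond w k0A) //; apply: le_trans.
    rewrite ler_pM2l // addrA lerDl.
    by apply: sumr_ge0 => l /andP [/A'_sub lA _]; have [] := wrA l lA.
  - move=> k /A'_sub kA; have [wk_ge0 /andP [a_le_rk _]] := wrA k kA.
    by rewrite wk_ge0 a_le_rk r_le_r0.
  - move=> k kA'; have kA := A'_sub k kA'.
    by rewrite -addrA -(big_setD1_cond w k0A) ?massC ?r_le_r0.
have lnMa : ln (M / a) = ln (M / r0) + ln (r0 / a).
  by rewrite -lnM ?posrE ?divr_gt0 // mulrA divfK ?gt_eqF.
rewrite (big_setD1 k0 k0A) -/A' /= lnMa.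
have -> : T * M + (w k0 * r0 + \sum_(k in A') w k * r k)
  = T * (M - r0) + ((T + w k0) * r0 + \sum_(k in A') w k * r k) by ring.
have -> : C * (1 + (ln (M / r0) + ln (r0 / a))) = C * ln (M / r0) + C * (1 + ln (r0 / a)).
  by ring.
by rewrite lerD // top_layer_le_ln.
Qed.

Lemma weighted_sum_le_ln (K : finType) (w r : K -> R) a C M :
  0 < a -> a <= M -> 0 <= C ->
  (forall k, 0 <= w k /\ a <= r k <= M) ->
  (forall k, r k * \sum_(l | r k <= r l) w l <= C) ->
  \sum_k w k * r k <= C * (1 + ln (M / a)).
Proof.
move=> a_gt0 aM C_ge0 wr massC.
have massC' : {in [set: K]%SET, forall k,
    r k * (0 + \sum_(l in [set: K]%SET | r k <= r l) w l) <= C}.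
  by move=> k _; rewrite add0r; under eq_bigl do rewrite finset.in_setT; exact: massC.
have := @weighted_sum_le_ln_from K w r [set: K]%SET a C 0 M a_gt0 aM (lexx 0) _
  (in1W wr) massC'.
rewrite mulr0 mul0r add0r => /(_ C_ge0).
by under eq_bigl do rewrite finset.in_setT.
Qed.

End LayerCake.

Section FinitelyManyTypes.
Variables (R : realType) (n m : nat) (theta : 'I_m -> R).
Variables (d : 'I_n -> 'I_m -> ('I_n -> R) -> R) (pbar : 'I_m -> 'I_n -> R) (f : 'I_n -> R).
Hypotheses (theta_gt0 : forall j, 0 < theta j) (d_ge0 : forall i j p, 0 <= d i j p).
Hypotheses (f_gt0 : pos_vec f) (A0 : A0_fin d pbar).

Definition mass (k : 'I_m * 'I_n) : R := theta k.1 * (f k.2 * d k.2 k.1 (pbar k.1)).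
Definition ratio (k : 'I_m * 'I_n) : R := pbar k.1 k.2 / f k.2.

Lemma mass_ge0 k : 0 <= mass k.
Proof. by rewrite !mulr_ge0 // ltW. Qed.

Lemma ratio_gt0 k : 0 < ratio k.
Proof. by rewrite divr_gt0 //; case: (A0 k.1). Qed.

Lemma ratio_setE : ratio_set pbar f = range ratio.
Proof.
apply/seteqP; split=> x; first by case=> j _ [i _ <-]; exists (j, i).
by case=> -[j i] _ <-; exists j => //; exists i.
Qed.

Lemma Rbar_fin_mass : Rbar_fin theta d pbar = \sum_k mass k * ratio k.
Proof.
rewrite /Rbar_fin /profit; under eq_bigr do rewrite mulr_sumr.
rewrite pair_bigA /=; apply: eq_bigr => -[j i] _ /=.
by rewrite /mass /ratio /=; field; rewrite gt_eqF.
Qed.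

Lemma G_fin_mass q : G_fin theta d pbar f q = \sum_(k | q <= ratio k) mass k.
Proof.
rewrite /G_fin; under eq_bigr do rewrite mulr_sumr.
rewrite pair_bigA [RHS]big_mkcond /=; apply: eq_bigr => -[j i] _ /=.
by rewrite /delta /mass /ratio /=; case: ifP => _; ring.
Qed.

Lemma mulr_H_fin q : q * H_fin theta d f q = Ragg_fin theta d (scalev q f).
Proof.
rewrite /H_fin /Ragg_fin /profit mulr_sumr; apply: eq_bigr => j _.
rewrite mulrCA mulr_sumr; congr (_ * _); apply: eq_bigr => i _.
by rewrite /scalev mulrA.
Qed.

Lemma Ragg_fin_le_Rbar p : nonneg_vec p -> Ragg_fin theta d p <= Rbar_fin theta d pbar.
Proof.
move=> p_ge0; apply: ler_sum => j _; apply: ler_wpM2l; first exact: ltW.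
by case: (A0 j) => _; apply.
Qed.

Lemma Ragg_fin_le_Rf q : 0 < q -> Ragg_fin theta d (scalev q f) <= Rf_fin theta d f.
Proof.
move=> q_gt0; apply: ub_le_sup; last by exists q.
exists (Rbar_fin theta d pbar) => _ [q' q'_gt0 <-]; apply: Ragg_fin_le_Rbar => i.
by rewrite mulr_ge0 // ltW.
Qed.

Lemma Rf_fin_ge0 : 0 <= Rf_fin theta d f.
Proof.
apply: le_trans (Ragg_fin_le_Rf ltr01); rewrite /Ragg_fin; apply: sumr_ge0 => j _.
apply: mulr_ge0; first exact: ltW.
apply: sumr_ge0 => i _.
by rewrite mulr_ge0 // mulr_ge0 // ltW.
Qed.

Lemma Rbar_fin_le_ln : A1_fin theta d pbar f ->
  Rbar_fin theta d pbar <= (1 + ln (qmax pbar f / qmin pbar f)) * Rf_fin theta d f.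
Proof.
move=> A1; rewrite Rbar_fin_mass /qmin /qmax ratio_setE mulrC.
have [k0 _ | K0] := pickP (@predT ('I_m * 'I_n)); last first.
  (* no pair (j, i) at all: [qmin] and [qmax] are [inf set0 = sup set0 = 0], and [ln 0 = 0] *)
  have -> : range ratio = set0 by apply/seteqP; split=> x // [k]; have := K0 k.
  rewrite big1 => [|k _]; last by have := K0 k.
  by rewrite sup0 inf0 mul0r ln0 // addr0 mulr1 Rf_fin_ge0.
have [kmin -> kmin_min] := inf_range_fin ratio k0.
have [kmax -> kmax_max] := sup_range_fin ratio k0.
apply: weighted_sum_le_ln => [||||k].
- exact: ratio_gt0.
- exact: kmax_max.
- exact: Rf_fin_ge0.
- by move=> k; rewrite mass_ge0 kmin_min kmax_max.
rewrite -G_fin_mass; apply: le_trans (Ragg_fin_le_Rf (ratio_gt0 k)).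
by rewrite -mulr_H_fin ler_wpM2l ?A1 // ltW // ratio_gt0.
Qed.

End FinitelyManyTypes.

Section UniformTypes.
Variable R : realType.
Local Notation mu := (@lebesgue_measure R).

Lemma integral_itv_inv (a b : R) : 0 < a -> a < b ->
  (\int[mu]_(x in `[a, b]) (x^-1)%:E = (ln b)%:E - (ln a)%:E)%E.
Proof.
move=> a_gt0 ab; apply: (continuous_FTC2 ab).
- apply: continuous_in_subspaceT => x; rewrite inE /= in_itv /= => /andP [ax _].
  by apply: inv_continuous; rewrite gt_eqF // (lt_le_trans a_gt0 ax).
- split.
  + move=> x; rewrite in_itv /= => /andP [ax _].
    by apply: ex_derive; apply: is_derive1_ln; apply: lt_trans ax.
  + by apply: cvg_at_right_filter; apply: continuous_ln.
  + by apply: cvg_at_left_filter; apply: continuous_ln; apply: lt_trans ab.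
- move=> x; rewrite in_itv /= => /andP [ax _].
  by rewrite derive1E; have [_ ->] := is_derive1_ln (lt_trans a_gt0 ax).
Qed.

Lemma integral_itv_le (h : R -> R) (a b e c : R) : measurable_fun setT h ->
  a <= b -> b <= e -> (forall t, 0 <= h t <= c) -> (forall t, b < t <= e -> h t = 0) ->
  (\int[mu]_(t in `[a, e]) (h t)%:E <= (c * (b - a))%:E)%E.
Proof.
move=> mh ab be h_bnd h0.
have mhE : measurable_fun setT (fun t => (h t)%:E) by apply/measurable_EFinP.
have h_ge0 t : (0 <= (h t)%:E)%E by rewrite lee_fin; have /andP [] := h_bnd t.
rewrite (@itv_bndbnd_setU _ _ (BLeft a) (BRight b) (BRight e)) //.
rewrite ge0_integral_setU //=; last 2 first.
- exact: measurable_funTS.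
- apply: lt_disjoint => x y; rewrite !in_itv /= => /andP [_ xb] /andP [bx _].
  exact: le_lt_trans xb bx.
rewrite (@eq_integral _ _ _ mu `]b, e] (fun=> 0%E)); last first.
  by move=> t; rewrite inE /= in_itv /= => /h0 ->.
rewrite integral0 adde0.
apply: (@le_trans _ _ (\int[mu]_(t in `[a, b]) (cst c%:E) t)%E).
  apply: ge0_le_integral => //; first exact: measurable_funTS.
  by move=> t _; rewrite lee_fin; have /andP [] := h_bnd t.
rewrite integral_cst //= lebesgue_measure_itv /= lte_fin.
case: ltP => [_|ba]; first by rewrite -EFinD -EFinM.
have -> : b = a by apply/eqP; rewrite eq_le ba ab.
by rewrite mule0 subrr mulr0.
Qed.

Let idTR : measurableTypeR R -> R := idfun.
#[local] HB.instance Definition _ :=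
  @isMeasurableFun.Build _ _ _ _ idTR (@measurable_id _ _ setT).

(* [uniform_prob] lives on the Lebesgue sigma-algebra; its image by the identity is the
   uniform distribution on [0, 1] as a probability on the Borel sets of [R]. *)
Definition uniform01 : probability R R :=
  distribution (uniform_prob (@ltr01 R))
    (idTR : {RV uniform_prob (@ltr01 R) >-> R}).

Lemma integral_uniform01 (g : R -> \bar R) :
  measurable_fun [set: R] g -> (forall x, (0 <= g x)%E) ->
  (\int[uniform01]_x g x = \int[mu]_(x in `[0%R, 1%R]) g x)%E.
Proof.
move=> mg g_ge0; rewrite ge0_integral_distribution //.
by rewrite integral_uniform //= subr0 invr1 mul1e.
Qed.

Lemma integrable_bounded d (T : measurableType d) (P : probability T R) (g : T -> R) B :
  measurable_fun setT g -> (forall x, `|g x| <= B) -> P.-integrable setT (EFin \o g).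
Proof.
move=> mg g_bnd; apply: measurable_bounded_integrable => //.
  exact: le_lt_trans (probability_le1 P measurableT) (ltry 1).
exists B; split; first exact: num_real.
by move=> M BM x _ /=; apply: le_trans (g_bnd x) _; exact: ltW.
Qed.

End UniformTypes.

Section Tightness.
Variables (R : realType) (rho : R).
Hypothesis rho_gt1 : 1 < rho.
Local Notation mu := (@lebesgue_measure R).

Let rho_gt0 : 0 < rho. Proof. exact: lt_trans rho_gt1. Qed.
Let rhoV_gt0 : 0 < rho^-1. Proof. by rewrite invr_gt0. Qed.
Let rhoV_lt1 : rho^-1 < 1. Proof. by rewrite invf_lt1. Qed.

(* On [0, 1] the willingness to pay of type [t] is [min rho (1/t)]; clamping [|t|]
   keeps it continuous and bounded on all of [R], where no other type has mass. *)
Definition inv_wtp (t : R) : R := Num.max rho^-1 (Num.min 1 `|t|).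
Definition wtp (t : R) : R := (inv_wtp t)^-1.

Lemma inv_wtp_ge t : rho^-1 <= inv_wtp t.
Proof. by rewrite le_max lexx. Qed.

Lemma inv_wtp_le1 t : inv_wtp t <= 1.
Proof. by rewrite ge_max (ltW rhoV_lt1) ge_min lexx. Qed.

Lemma inv_wtp_gt0 t : 0 < inv_wtp t.
Proof. exact: lt_le_trans rhoV_gt0 (inv_wtp_ge t). Qed.

Lemma wtp_ge1 t : 1 <= wtp t.
Proof. by rewrite invf_ge1 ?inv_wtp_gt0 ?inv_wtp_le1. Qed.

Lemma wtp_gt0 t : 0 < wtp t.
Proof. exact: lt_le_trans ltr01 (wtp_ge1 t). Qed.

Lemma wtp_le t : wtp t <= rho.
Proof.
by rewrite -[X in _ <= X]invrK lef_pV2 ?posrE ?inv_wtp_gt0 ?inv_wtp_ge.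
Qed.

Lemma wtp_small t : `|t| <= rho^-1 -> wtp t = rho.
Proof.
move=> t_le; rewrite /wtp /inv_wtp (max_idPl _) ?invrK //.
by rewrite ge_min t_le orbT.
Qed.

Lemma wtp_mid t : rho^-1 <= `|t| <= 1 -> wtp t = `|t|^-1.
Proof.
by case/andP=> t_ge t_le; rewrite /wtp /inv_wtp (min_idPr t_le) (max_idPr t_ge).
Qed.

Lemma norm_le_inv_wtp q t : 1 < q -> q <= wtp t -> `|t| <= q^-1.
Proof.
move=> q_gt1 q_le; have q_gt0 : 0 < q by apply: lt_trans q_gt1.
have : inv_wtp t <= q^-1.
  by rewrite -[inv_wtp t]invrK lef_pV2 ?posrE ?invr_gt0 ?inv_wtp_gt0.
rewrite ge_max ge_min => /andP [_ /orP [|//]].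
by rewrite leNgt invf_lt1 ?q_gt1.
Qed.

Lemma measurable_wtp : measurable_fun setT wtp.
Proof.
apply: continuous_measurable_fun => t.
apply: continuousV; first by rewrite gt_eqF ?inv_wtp_gt0.
apply: continuous_max; first exact: cvg_cst.
by apply: continuous_min; [exact: cvg_cst | exact: norm_continuous].
Qed.

Lemma integral_wtp : (\int[uniform01 R]_t (wtp t)%:E = (1 + ln rho)%:E)%E.
Proof.
have wtp_ge0 t : (0 <= (wtp t)%:E)%E by rewrite lee_fin; exact/ltW/wtp_gt0.
have mwtp : measurable_fun setT (fun t => (wtp t)%:E).
  by apply/measurable_EFinP; exact: measurable_wtp.
rewrite integral_uniform01 //.
rewrite (@itv_bndbnd_setU _ _ (BLeft 0) (BLeft rho^-1) (BRight 1)); last 2 first.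
- by rewrite bnd_simp ltW.
- by rewrite bnd_simp ltW.
rewrite ge0_integral_setU //=; last 2 first.
- exact: measurable_funTS.
- apply: lt_disjoint => x y; rewrite !in_itv /= => /andP [_ xr] /andP [ry _].
  exact: lt_le_trans xr ry.
rewrite (@eq_integral _ _ _ mu `[0, rho^-1[ (fun=> rho%:E)); last first.
  move=> x; rewrite inE /= in_itv /= => /andP [x_ge0 x_lt].
  by rewrite wtp_small // ger0_norm // ltW.
rewrite (@eq_integral _ _ _ mu `[rho^-1, 1] (fun x => (x^-1)%:E)); last first.
  move=> x; rewrite inE /= in_itv /= => x_in.
  have x_ge0 : 0 <= x by case/andP: x_in => + _; apply: le_trans; exact: ltW.
  by rewrite wtp_mid ger0_norm.
rewrite integral_cst //= lebesgue_measure_itv /= lte_fin rhoV_gt0.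
rewrite integral_itv_inv // ln1 lnV ?posrE // -EFinD.
by rewrite subr0 mulfV ?gt_eqF // sub0r opprK.
Qed.

Definition buys (q t : R) : R := if q <= wtp t then 1 else 0.
Definition demand1 : 'I_1 -> R -> ('I_1 -> R) -> R := fun i t p => buys (p i) t.
Definition price1 : R -> 'I_1 -> R := fun t _ => wtp t.
Definition unit1 : 'I_1 -> R := fun=> 1.

Lemma measurable_buys q : measurable_fun setT (buys q).
Proof.
apply: measurable_fun_ifT; last 2 first; [exact: measurable_cst..|].
exact: measurable_fun_ler (measurable_cst q) measurable_wtp.
Qed.

Lemma buys_ge0 q t : 0 <= buys q t. Proof. by rewrite /buys; case: ifP. Qed.
Lemma buys_le1 q t : buys q t <= 1. Proof. by rewrite /buys; case: ifP. Qed.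

Lemma profit_price1 t : profit (demand1^~ t) (price1 t) = wtp t.
Proof. by rewrite /profit big_ord1 /demand1 /buys /price1 lexx mulr1. Qed.

Lemma profit_scalev1 q t : profit (demand1^~ t) (scalev q unit1) = q * buys q t.
Proof. by rewrite /profit big_ord1 /demand1 /scalev /unit1 mulr1. Qed.

Lemma G_integrand1 q t : G_integrand demand1 price1 unit1 q t = buys q t.
Proof.
by rewrite /G_integrand big_ord1 /demand1 /buys /price1 /unit1 lexx !mul1r /delta divr1.
Qed.

Lemma H_integrand1 q t : H_integrand demand1 unit1 q t = buys q t.
Proof. by rewrite /H_integrand big_ord1 /demand1 /unit1 /scalev mulr1 mul1r. Qed.

Lemma integral_profit_scalev1 q : 0 < q ->
  (\int[uniform01 R]_t (profit (demand1^~ t) (scalev q unit1))%:E <= 1)%E.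
Proof.
move=> q_gt0; under eq_integral do rewrite profit_scalev1.
have buys_bnd t : 0 <= q * buys q t <= q.
  by rewrite mulr_ge0 ?buys_ge0 ?ler_piMr ?buys_le1 // ltW.
have mbuys : measurable_fun setT (fun t => q * buys q t).
  by apply: measurable_funM; [exact: measurable_cst | exact: measurable_buys].
rewrite integral_uniform01; last 2 first.
- by apply/measurable_EFinP.
- by move=> t; rewrite lee_fin; case/andP: (buys_bnd t).
have [q_le1 | q_gt1] := leP q 1.
  have vanish t : 1 < t <= 1 -> q * buys q t = 0.
    by case/andP=> t_gt1 t_le1; move: (lt_le_trans t_gt1 t_le1); rewrite ltxx.
  apply: (le_trans (integral_itv_le mbuys ler01 (lexx 1) buys_bnd vanish)).
  by rewrite subr0 mulr1 lee_fin.
have qV_ge0 : 0 <= q^-1 by rewrite invr_ge0 ltW.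
have qV_le1 : q^-1 <= 1 by rewrite invf_le1 ?ltW.
have vanish t : q^-1 < t <= 1 -> q * buys q t = 0.
  case/andP=> qV_lt _; rewrite /buys; case: ifPn => [q_le|]; last by rewrite mulr0.
  have t_ge0 : 0 <= t by rewrite (le_trans qV_ge0 (ltW qV_lt)).
  by have := norm_le_inv_wtp q_gt1 q_le; rewrite ger0_norm // leNgt qV_lt.
apply: (le_trans (integral_itv_le mbuys qV_ge0 qV_le1 buys_bnd vanish)).
by rewrite subr0 mulfV ?gt_eqF.
Qed.

Lemma Ragg_c_le1 q : 0 < q -> Ragg_c (uniform01 R) demand1 (scalev q unit1) <= 1.
Proof.
move=> q_gt0; have le1 := integral_profit_scalev1 q_gt0.
have ge0 : (0 <= \int[uniform01 R]_t (profit (demand1^~ t) (scalev q unit1))%:E)%E.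
  by apply: integral_ge0 => t _; rewrite profit_scalev1 lee_fin mulr_ge0 ?buys_ge0 ?ltW.
rewrite /Ragg_c -lee_fin fineK // ge0_fin_numE //; exact: le_lt_trans le1 (ltry 1).
Qed.

Lemma Ragg_c_scalev1 : Ragg_c (uniform01 R) demand1 (scalev 1 unit1) = 1.
Proof.
rewrite /Ragg_c; under eq_integral do rewrite profit_scalev1 /buys wtp_ge1 mulr1.
rewrite integral_cst // [X in (1 * X)%E](_ : _ = 1%E) ?mul1e //.
exact: probability_setT.
Qed.

Lemma Rf_c1 : Rf_c (uniform01 R) demand1 unit1 = 1.
Proof.
apply: sup_max; first by exists 1; [exact: ltr01 | exact: Ragg_c_scalev1].
by move=> _ [q q_gt0 <-]; exact: Ragg_c_le1.
Qed.

Lemma Rbar_c1 : Rbar_c (uniform01 R) demand1 price1 = 1 + ln rho.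
Proof.
by rewrite /Rbar_c; under eq_integral do rewrite profit_price1; rewrite integral_wtp.
Qed.

Lemma ratio_set1 : ratio_set price1 unit1 = range wtp.
Proof.
apply/seteqP; split=> x; first by case=> t _ [i _ <-]; exists t => //; rewrite divr1.
by case=> t _ <-; exists t => //; exists ord0 => //; rewrite divr1.
Qed.

Lemma qmax1 : qmax price1 unit1 = rho.
Proof.
rewrite /qmax ratio_set1; apply: sup_max; last by move=> _ [t _ <-]; exact: wtp_le.
by exists 0 => //; rewrite wtp_small // normr0 ltW.
Qed.

Lemma qmin1 : qmin price1 unit1 = 1.
Proof.
rewrite /qmin ratio_set1; apply: inf_min; last by move=> _ [t _ <-]; exact: wtp_ge1.
by exists 1 => //; rewrite wtp_mid ?normr1 ?invr1 // (ltW rhoV_lt1) lexx.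
Qed.

Lemma profit1_le_price1 t p : profit (demand1^~ t) p <= profit (demand1^~ t) (price1 t).
Proof.
rewrite profit_price1 /profit big_ord1 /demand1 /buys.
by case: ifP => [p_le|_]; rewrite ?mulr1 // mulr0; exact/ltW/wtp_gt0.
Qed.

Lemma continuum_instance1 : continuum_instance (uniform01 R) demand1 price1 unit1.
Proof.
have norm_buys q t : `|buys q t| <= 1 by rewrite ger0_norm ?buys_ge0 ?buys_le1.
have integrable_buys q := integrable_bounded (uniform01 R) (measurable_buys q) (norm_buys q).
split; first by move=> i; exact: ltr01.
split; first by move=> i t p; exact: buys_ge0.
split; first by move=> t; split=> [i|p _]; [exact: wtp_gt0 | exact: profit1_le_price1].
split.
  apply: (eq_integrable measurableT (EFin \o wtp)) => [t _|].
    by rewrite /= profit_price1.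
  apply: (integrable_bounded _ (B := rho) measurable_wtp) => t.
  by rewrite ger0_norm ?wtp_le //; exact/ltW/wtp_gt0.
split.
  move=> q q_gt0; apply: (eq_integrable measurableT (EFin \o (fun t => q * buys q t))).
    by move=> t _; rewrite /= profit_scalev1.
  apply: (integrable_bounded _ (B := q)) => [|t].
    by apply: measurable_funM; [exact: measurable_cst | exact: measurable_buys].
  by rewrite normrM (gtr0_norm q_gt0) ler_piMr ?norm_buys // ltW.
split.
  move=> q _; split.
    apply: (eq_integrable measurableT _ _ _ (integrable_buys q)) => t _.
    by rewrite /= G_integrand1.
  apply: (eq_integrable measurableT _ _ _ (integrable_buys q)) => t _.
  by rewrite /= H_integrand1.
split; first by exists 1 => _ [q q_gt0 <-]; exact: Ragg_c_le1.
by move=> q _; rewrite /G_c /H_c; under eq_integral do rewrite G_integrand1 -(H_integrand1 q).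
Qed.

End Tightness.

Lemma tightness (R : realType) (rho : R) : 1 < rho ->
  exists (n : nat) (theta : probability R R) (d : 'I_n -> R -> ('I_n -> R) -> R)
         (pbar : R -> 'I_n -> R) (f : 'I_n -> R),
    [/\ continuum_instance theta d pbar f,
        qmax pbar f / qmin pbar f = rho,
        0 < Rbar_c theta d pbar &
        Rbar_c theta d pbar = (1 + ln rho) * Rf_c theta d f].
Proof.
move=> rho_gt1; exists 1%N, (uniform01 R), (demand1 rho), (price1 rho), (@unit1 R).
split; first exact: continuum_instance1.
- by rewrite qmax1 // qmin1 // divr1.
- by rewrite Rbar_c1 // addr_gt0 // ln_gt0.
- by rewrite Rbar_c1 // Rf_c1 // mulr1.
Qed.

Theorem theorem1 (R : realType) :
  (* the bound, for finitely many products n and customer types m *)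
  (forall (n m : nat) (theta : 'I_m -> R) (d : 'I_n -> 'I_m -> ('I_n -> R) -> R)
          (pbar : 'I_m -> 'I_n -> R) (f : 'I_n -> R),
      (forall j, 0 < theta j) -> \sum_(j < m) theta j = 1 ->
      (forall i j p, 0 <= d i j p) ->
      pos_vec f ->
      A0_fin d pbar ->
      A1_fin theta d pbar f ->
      Rbar_fin theta d pbar
        <= (1 + ln (qmax pbar f / qmin pbar f)) * Rf_fin theta d f)
  /\
  (* tightness, with a continuum of customer types *)
  (forall rho : R, 1 < rho ->
     exists (n : nat) (theta : probability R R) (d : 'I_n -> R -> ('I_n -> R) -> R)
            (pbar : R -> 'I_n -> R) (f : 'I_n -> R),
       [/\ continuum_instance theta d pbar f,
           qmax pbar f / qmin pbar f = rho,
           0 < Rbar_c theta d pbar &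
           Rbar_c theta d pbar = (1 + ln rho) * Rf_c theta d f]).
Proof.
split; last exact: tightness.
by move=> n m theta d pbar f theta_gt0 _ d_ge0 f_gt0 A0; exact: Rbar_fin_le_ln.
Qed.
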